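(* Let $n\ge3$. Then $d'_{L_n^2}=n-\left\lceil\frac n5\right\rceil$.
   Context: $L_n^2$ is the graph on $\{1,\dots,n\}$ with edges $\{i,i+1\}$ and $\{i,i+2\}$. A bouquet in a graph $G$ is a subgraph that is a star with vertex set $\{w,z_1,\dots,z_t\}$, $t\ge1$, and edges $\{w,z_i\}$ (all edges of $G$); $w$ is its root and $z_1,\dots,z_t$ its flowers. A set $\mathcal B=\{B_1,\dots,B_r\}$ of bouquets of $G$ is semi-strongly disjoint if $V(B_i)\cap V(B_j)=\emptyset$ for $i\ne j$ and no two roots of bouquets in $\mathcal B$ are adjacent in $G$. $\mathcal F(\mathcal B)$ denotes the set of all flowers of bouquets in $\mathcal B$, and $d'_G=\max\{|\mathcal F(\mathcal B)|:\mathcal B$ a semi-strongly disjoint set of bouquets of $G\}$. *)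

From mathcomp Require Import all_boot.
Set Implicit Arguments. Unset Strict Implicit. Unset Printing Implicit Defensive.

(* L_n^2 : vertices 1..n are represented by 'I_n (vertex k+1 <-> ordinal k);
   edges {i,i+1} and {i,i+2}. *)
Definition L2rel (n : nat) : rel 'I_n :=
  fun i j => [|| i.+1 == j :> nat, j.+1 == i :> nat,
                 i.+2 == j :> nat | j.+2 == i :> nat].

Arguments L2rel : clear implicits.

(* A bouquet is given by its root w and its set of flowers Z:
   Z nonempty, w not in Z, and every flower adjacent to w in G. *)
Definition bouquet (T : finType) (e : rel T) (b : T * {set T}) : bool :=
  [&& b.1 \notin b.2, b.2 != set0 & [forall z in b.2, e b.1 z]].

Definition bverts (T : finType) (b : T * {set T}) : {set T} := b.1 |: b.2.

Definition semi_strong (T : finType) (e : rel T) (B : {set T * {set T}}) : bool :=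
  [forall b in B, bouquet e b] &&
  [forall b in B, forall c in B,
     (b != c) ==> ([disjoint bverts b & bverts c] && ~~ e b.1 c.1)].

Definition nflowers (T : finType) (B : {set T * {set T}}) : nat :=
  #|\bigcup_(b in B) b.2|.

Definition dprime (T : finType) (e : rel T) : nat :=
  \max_(B : {set T * {set T}} | semi_strong e B) nflowers B.

From mathcomp Require Import all_boot.
From mathcomp Require Import zify.

Set Implicit Arguments.
Unset Strict Implicit.
Unset Printing Implicit Defensive.

(* Upper bound: the roots of a semi-strongly disjoint family are distinct and
   are not flowers, and each root carries at most 4 flowers, so a family with
   f flowers and b bouquets has f + b <= n and f <= 4 b, whence f <= 4n/5.
   Lower bound: cut 0, ..., n-1 into blocks of five consecutive vertices and
   make each block a star centred at its middle vertex (at its last vertex if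
   the final block is short); centres of different blocks are at distance at
   least 3, and every vertex except the ceil(n/5) centres is a flower. *)

Lemma card_bigcup_le (I T : finType) (P : pred I) (A : I -> {set T}) :
  #|\bigcup_(i | P i) A i| <= \sum_(i | P i) #|A i|.
Proof.
elim/big_rec2: _ => [|i m U _ le_Um]; first by rewrite cards0.
by rewrite (leq_trans (leq_card_setU (A i) U).1) ?leq_add2l.
Qed.

Section SemiStrongBound.
Variables (T : finType) (e : rel T).

Lemma nflowers_add_card_le (B : {set T * {set T}}) :
  semi_strong e B -> nflowers B + #|B| <= #|T|.
Proof.
case/andP=> /forall_inP bouquetB /forall_inP disjB.
have disj_bverts b c : b \in B -> c \in B -> b != c ->
    [disjoint bverts b & bverts c].
  by move=> bB cB bc; case/andP: (implyP (forall_inP (disjB b bB) c cB) bc).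
set F := \bigcup_(b in B) b.2; set R := [set b.1 | b in B].
have cardR : #|R| = #|B|.
  apply: card_in_imset => b c bB cB eq_root; apply/eqP/negPn/negP => bc.
  have /disjoint_setI0/setP/(_ b.1) := disj_bverts b c bB cB bc.
  by rewrite !inE eq_root eqxx.
have FR0 : F :&: R = set0.
  apply/setP => x; rewrite !inE.
  apply/negbTE/andP => -[/bigcupP[b bB xb] /imsetP[c cB xc]].
  have [ebc|bc] := eqVneq b c.
    by case/and3P: (bouquetB b bB) => /negP; rewrite ebc -xc -ebc.
  have /disjoint_setI0/setP/(_ x) := disj_bverts b c bB cB bc.
  by rewrite !inE xb xc eqxx orbT.
have := cardsU F R; rewrite FR0 cards0 subn0 /nflowers -/F -cardR => <-.
exact: max_card.
Qed.

Lemma nflowers_le_degree (d : nat) (B : {set T * {set T}}) :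
  (forall w, #|[set z | e w z]| <= d) -> semi_strong e B ->
  nflowers B <= d * #|B|.
Proof.
move=> degree_le /andP[/forall_inP bouquetB _].
rewrite /nflowers; apply: leq_trans (card_bigcup_le _ _) _.
rewrite mulnC -sum_nat_const; apply: leq_sum => b bB.
apply: leq_trans (degree_le b.1); apply: subset_leq_card; apply/subsetP => z zb.
by case/and3P: (bouquetB b bB) => _ _ /forall_inP/(_ z zb); rewrite inE.
Qed.

Lemma dprime_le_degree (d : nat) :
  (forall w, #|[set z | e w z]| <= d) -> dprime e <= d * #|T| %/ d.+1.
Proof.
move=> degree_le; apply/bigmax_leqP => B ssB; rewrite leq_divRL //.
have := nflowers_add_card_le ssB; have := nflowers_le_degree degree_le ssB.
nia.
Qed.

End SemiStrongBound.

Section StarPartition.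
Variables (T : finType) (e : rel T) (r : T -> T).
Hypothesis r_idem : forall x, r (r x) = r x.
Hypothesis r_adj : forall x, r x != x -> e (r x) x.
Hypothesis r_indep : forall x y, r x != r y -> ~~ e (r x) (r y).

Definition star_family : {set T * {set T}} :=
  [set (r x, [set y | (r y == r x) && (y != r x)]) | x in [set x | r x != x]].

Lemma star_family_semi_strong : semi_strong e star_family.
Proof.
apply/andP; split.
  apply/forall_inP => _ /imsetP[x xnr ->]; apply/and3P; split => /=.
  - by rewrite inE eqxx andbF.
  - by apply/set0Pn; exists x; rewrite inE eqxx eq_sym; rewrite inE in xnr.
  - apply/forall_inP => y; rewrite inE => /andP[/eqP <- ynr].
    by apply: r_adj; rewrite eq_sym.
apply/forall_inP => _ /imsetP[x _ ->]; apply/forall_inP => _ /imsetP[y _ ->].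
apply/implyP => neq; have rxy : r x != r y by apply: contraNneq neq => ->.
rewrite r_indep // andbT -setI_eq0; apply/eqP/setP => z; rewrite /bverts /= !inE.
apply/negP => /andP[/orP[/eqP zx | /andP[/eqP zx _]] /orP[/eqP zy | /andP[/eqP zy _]]].
- by rewrite -zx zy eqxx in rxy.
- by rewrite -zy zx r_idem eqxx in rxy.
- by rewrite -zx zy r_idem eqxx in rxy.
- by rewrite -zx zy eqxx in rxy.
Qed.

Lemma nflowers_star_family : nflowers star_family = #|[set x | r x != x]|.
Proof.
apply: eq_card => y; rewrite inE; apply/bigcupP/idP.
  by case=> _ /imsetP[x _ ->]; rewrite inE => /andP[/eqP ->]; rewrite eq_sym.
move=> ynr; exists (r y, [set z | (r z == r y) && (z != r y)]).
  by apply: imset_f; rewrite inE.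
by rewrite inE eqxx eq_sym.
Qed.

Lemma dprime_ge_star : #|[set x | r x != x]| <= dprime e.
Proof.
rewrite -nflowers_star_family.
exact: (bigmax_sup _ star_family_semi_strong).
Qed.

End StarPartition.

Section L2.
Variable n : nat.

Lemma L2_degree_le (w : 'I_n) : #|[set z | L2rel n w z]| <= 4.
Proof.
rewrite cardE -(size_map val).
apply: (@uniq_leq_size _ _ [:: w.+1; w - 1; w.+2; w - 2]).
  by rewrite map_inj_uniq ?enum_uniq //; exact: val_inj.
move=> _ /mapP[z + ->]; rewrite /= mem_enum inE /L2rel !inE.
by case/or4P => /eqP; lia.
Qed.

Definition L2centre (k : nat) : nat := 5 * k + minn 2 (n - 5 * k - 1).

Lemma L2centre_lt (k : nat) : 5 * k < n -> L2centre k < n.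
Proof. rewrite /L2centre; lia. Qed.

Lemma L2centre_block_lt (x : 'I_n) : L2centre (x %/ 5) < n.
Proof. by apply: L2centre_lt; move: (ltn_ord x); lia. Qed.

Lemma L2centre_ord_lt (k : 'I_((n + 4) %/ 5)) : L2centre k < n.
Proof. by apply: L2centre_lt; move: (ltn_ord k); lia. Qed.

Definition L2star (x : 'I_n) : 'I_n := Ordinal (L2centre_block_lt x).

Definition L2centre_ord (k : 'I_((n + 4) %/ 5)) : 'I_n := Ordinal (L2centre_ord_lt k).

Lemma L2star_idem (x : 'I_n) : L2star (L2star x) = L2star x.
Proof. by apply: val_inj; rewrite /= /L2centre; move: (ltn_ord x); lia. Qed.

Lemma L2star_adj (x : 'I_n) : L2star x != x -> L2rel n (L2star x) x.
Proof.
rewrite -val_eqE /L2rel /= /L2centre.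
by move: (ltn_ord x); lia.
Qed.

Lemma L2star_indep (x y : 'I_n) :
  L2star x != L2star y -> ~~ L2rel n (L2star x) (L2star y).
Proof.
rewrite -val_eqE /L2rel /= /L2centre.
by move: (ltn_ord x) (ltn_ord y); lia.
Qed.

Lemma card_L2star_moved : #|[set x | L2star x != x]| = n - (n + 4) %/ 5.
Proof.
have -> : [set x | L2star x != x] = ~: [set L2centre_ord k | k in 'I_((n + 4) %/ 5)].
  apply/setP => x; rewrite !inE; congr negb; apply/eqP/imsetP.
    move=> fixed; have km : x %/ 5 < (n + 4) %/ 5 by move: (ltn_ord x); lia.
    by exists (Ordinal km) => //; apply: val_inj; rewrite -[in LHS]fixed.
  by case=> k _ ->; apply: val_inj; rewrite /= /L2centre; move: (ltn_ord k); lia.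
rewrite cardsCs setCK card_imset ?card_ord // => k l /(congr1 val) /=.
by rewrite /L2centre => kl; apply: val_inj => /=; move: (ltn_ord k) (ltn_ord l) kl; lia.
Qed.

End L2.

Theorem proposition4p3 (n : nat) (hn : 3 <= n) :
  dprime (L2rel n) = n - (n + 4) %/ 5.
Proof.
(* The formula holds for every n. *)
apply/eqP; rewrite eqn_leq; apply/andP; split.
  apply: leq_trans (dprime_le_degree (@L2_degree_le n)) _.
  by rewrite card_ord; lia.
rewrite -card_L2star_moved.
exact: dprime_ge_star (@L2star_idem n) (@L2star_adj n) (@L2star_indep n).
Qed.
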